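(* Fix integers $K\ge2$, $M>N\ge1$, positive reals $P_r,d_{dr},\alpha$ and, for $k\in\mathcal K=\{1,\dots,K\}$, positive reals $P_k,d_{dk},d_{rk}$ and weights $\mu_k\in[0,1]$ with $\sum_{k}\mu_k=1$. Let $\mathcal C(x)=\log(1+x)$ and for $Q_1,\dots,Q_K>0$ define $I_k=\mathcal{C}\big(\tfrac{P_k(M-N)}{d_{dk}^{\alpha}}+\tfrac{P_k}{(d_{rk}^{\alpha}/N)+Q_k}\big)$, $J_k=\mathcal{C}\big(\tfrac{P_k(M-N)}{d_{dk}^{\alpha}}\big)+\xi$, $J_\Lambda=\xi+\sum_{k\in\Lambda}\mathcal{C}\big(\tfrac{P_k(M-N)}{d_{dk}^{\alpha}}\big)$ for $\Lambda\subseteq\mathcal K$, where $\xi=N\mathcal{C}\big(\tfrac{P_r(M-N)}{Nd_{dr}^{\alpha}}\big)-\sum_{k=1}^K\mathcal{C}\big(\tfrac{d_{rk}^{\alpha}}{NQ_k}\big)$. Consider $$\max_{\{R_k\},\{Q_k\}}\sum_{k=1}^K\mu_kR_k\quad\text{s.t. } R_k\le\min\{I_k,J_k\},\ Q_k\ge0\ (k\in\mathcal K),\quad \sum_{k\in\Lambda}R_k\le J_\Lambda\ \ \forall\Lambda\subseteq\mathcal K.$$ Let $a_k=1+P_k(M-N)/d_{dk}^\alpha$, $b_k=P_kN/d_{rk}^\alpha$, $\omega_k=\frac{a_k+b_k}{\mu_kb_k}$, $\lambda_s=\big(1+\frac{P_r(M-N)}{Nd_{dr}^\alpha}\big)^N$,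 and assume the users are indexed so that $\omega_1\le\omega_2\le\dots\le\omega_K$. Let $\upsilon^*$ be the largest $\upsilon\in\{1,\dots,K\}$ such that $$\prod_{k=1}^{\upsilon}\Big(\omega_{\upsilon}-\frac1{\mu_k}\Big)\le\lambda_s\prod_{k=1}^{\upsilon}\frac{a_k}{\mu_kb_k},$$ let $x_s$ be the unique positive real root of $f(x)=\prod_{k=1}^{\upsilon^*}\big(x+\omega_{\upsilon^*}-\frac1{\mu_k}\big)-\lambda_s\prod_{k=1}^{\upsilon^*}\frac{a_k}{\mu_kb_k}$, and set $\lambda_k^*=\frac{\mu_kb_k}{a_k}\big(x_s+\omega_{\upsilon^*}-\frac1{\mu_k}\big)$ for $k\le\upsilon^*$ and $\lambda_k^*=1$ for $k>\upsilon^*$. Then optimal quantization noise variances for the problem are $$Q_k^*=\frac{(d_{rk}^{\alpha}/N)\,a_k+P_k}{a_k(\lambda_k^*-1)},\qquad k\in\mathcal K.$$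
   Context: When $\lambda_k^*=1$ the formula gives $Q_k^*=+\infty$, meaning user $k$'s stream is not quantized/forwarded by the relay; then the terms involving $Q_k$ are understood as their limits as $Q_k\to\infty$ (i.e. $\frac{P_k}{(d_{rk}^\alpha/N)+Q_k}\to0$, $\mathcal C(\frac{d_{rk}^\alpha}{NQ_k})\to0$), and optimality is in the sense of the supremum. These quantities describe the rate region of quantize-forward relaying with joint decoding in a $K$-user massive MIMO heterogeneous network (relay with $N$ antennas, destination with $M$ antennas, zero-forcing detection, pathloss distances $d$ with exponent $\alpha$). *)

From mathcomp Require Import all_boot all_order all_algebra.
From mathcomp Require Import all_classical all_reals all_analysis.
Set Implicit Arguments. Unset Strict Implicit. Unset Printing Implicit Defensive.
Import Order.TTheory GRing.Theory Num.Theory.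
Local Open Scope ring_scope.

(* Users are indexed by 'I_K (0-based: ordinal k stands for user k+1). *)

(* C(x) = log(1+x) (natural log; the base does not affect the optimizer) *)
Definition Cap (R : realType) (x : R) : R := ln (1 + x).

(* A quantization noise variance is an element of (0, +oo]:
   [Some q] is the finite value q, [None] is Q = +oo (stream not forwarded);
   Q-dependent terms at +oo are their limits (both are 0). *)
Definition qgain (R : realType) (N : nat) (alpha Pk drk : R) (Q : option R) : R :=
  match Q with Some q => Pk / (drk `^ alpha / N%:R + q) | None => 0 end.

Definition qpen (R : realType) (N : nat) (alpha drk : R) (Q : option R) : R :=
  match Q with Some q => Cap (drk `^ alpha / (N%:R * q)) | None => 0 end.

Definition dsnr (R : realType) (M N : nat) (alpha Pk ddk : R) : R :=
  Pk * (M%:R - N%:R) / ddk `^ alpha.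

Definition xi (R : realType) (K M N : nat) (Pr ddr alpha : R)
  (dr : 'I_K -> R) (Q : 'I_K -> option R) : R :=
  N%:R * Cap (Pr * (M%:R - N%:R) / (N%:R * ddr `^ alpha))
  - \sum_(k < K) qpen N alpha (dr k) (Q k).

Definition Irate (R : realType) (K M N : nat) (alpha : R)
  (P dd dr : 'I_K -> R) (Q : 'I_K -> option R) (k : 'I_K) : R :=
  Cap (dsnr M N alpha (P k) (dd k) + qgain N alpha (P k) (dr k) (Q k)).

Definition Jrate (R : realType) (K M N : nat) (Pr ddr alpha : R)
  (P dd dr : 'I_K -> R) (Q : 'I_K -> option R) (k : 'I_K) : R :=
  Cap (dsnr M N alpha (P k) (dd k)) + xi M N Pr ddr alpha dr Q.

Definition JLam (R : realType) (K M N : nat) (Pr ddr alpha : R)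
  (P dd dr : 'I_K -> R) (Q : 'I_K -> option R) (L : {set 'I_K}) : R :=
  xi M N Pr ddr alpha dr Q + \sum_(k in L) Cap (dsnr M N alpha (P k) (dd k)).

Definition feasible (R : realType) (K M N : nat) (Pr ddr alpha : R)
  (P dd dr : 'I_K -> R) (Rv : 'I_K -> R) (Q : 'I_K -> option R) : Prop :=
  [/\ (forall k, Rv k <= Irate M N alpha P dd dr Q k /\
                 Rv k <= Jrate M N Pr ddr alpha P dd dr Q k),
      (forall k, if Q k is Some q then 0 < q else true) &
      (forall L : {set 'I_K}, \sum_(k in L) Rv k <= JLam M N Pr ddr alpha P dd dr Q L)].

Definition objective (R : realType) (K : nat) (mu Rv : 'I_K -> R) : R :=
  \sum_(k < K) mu k * Rv k.

Definition acoef (R : realType) (K M N : nat) (alpha : R) (P dd : 'I_K -> R) (k : 'I_K) : R :=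
  1 + dsnr M N alpha (P k) (dd k).

Definition bcoef (R : realType) (K N : nat) (alpha : R) (P dr : 'I_K -> R) (k : 'I_K) : R :=
  P k * N%:R / dr k `^ alpha.

Definition omega (R : realType) (K M N : nat) (alpha : R) (P dd dr mu : 'I_K -> R) (k : 'I_K) : R :=
  (acoef M N alpha P dd k + bcoef N alpha P dr k) / (mu k * bcoef N alpha P dr k).

Definition lambda_s (R : realType) (M N : nat) (Pr ddr alpha : R) : R :=
  (1 + Pr * (M%:R - N%:R) / (N%:R * ddr `^ alpha)) ^+ N.

(* condition defining upsilon*, for upsilon = u+1 with u : 'I_K *)
Definition ups_cond (R : realType) (K M N : nat) (Pr ddr alpha : R)
  (P dd dr mu : 'I_K -> R) (u : 'I_K) : Prop :=
  \prod_(k < K | (k <= u)%N) (omega M N alpha P dd dr mu u - 1 / mu k)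
  <= lambda_s M N Pr ddr alpha *
     \prod_(k < K | (k <= u)%N) (acoef M N alpha P dd k / (mu k * bcoef N alpha P dr k)).

(* the polynomial f, for upsilon* = u+1 *)
Definition fpoly (R : realType) (K M N : nat) (Pr ddr alpha : R)
  (P dd dr mu : 'I_K -> R) (u : 'I_K) (x : R) : R :=
  \prod_(k < K | (k <= u)%N) (x + omega M N alpha P dd dr mu u - 1 / mu k)
  - lambda_s M N Pr ddr alpha *
    \prod_(k < K | (k <= u)%N) (acoef M N alpha P dd k / (mu k * bcoef N alpha P dr k)).

Definition lambda_star (R : realType) (K M N : nat) (alpha : R)
  (P dd dr mu : 'I_K -> R) (u : 'I_K) (xs : R) (k : 'I_K) : R :=
  if (k <= u)%N then
    mu k * bcoef N alpha P dr k / acoef M N alpha P dd k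
      * (xs + omega M N alpha P dd dr mu u - 1 / mu k)
  else 1.

Definition Qstar (R : realType) (K M N : nat) (alpha : R)
  (P dd dr mu : 'I_K -> R) (u : 'I_K) (xs : R) (k : 'I_K) : option R :=
  let l := lambda_star M N alpha P dd dr mu u xs k in
  if l == 1 then None
  else Some ((dr k `^ alpha / N%:R * acoef M N alpha P dd k + P k)
             / (acoef M N alpha P dd k * (l - 1))).

From mathcomp Require Import all_boot all_order all_algebra.
From mathcomp Require Import all_classical all_reals all_analysis.
From mathcomp Require Import ring lra.
Set Implicit Arguments. Unset Strict Implicit. Unset Printing Implicit Defensive.
Import Order.TTheory GRing.Theory Num.Theory.
Local Open Scope ring_scope.

(* Lagrangian duality with the single multiplier [nu = 1 / (x_s + omega_{upsilon*})]
   on the sum-rate constraints.  With [s_k = d_rk^alpha / N] and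
   [t_k = s_k / (s_k + Q_k)], the bound [I_k] becomes [ln (a_k + b_k t_k)] and the
   quantization penalty in [xi] becomes [- ln (1 - t_k)].  Weighting the sum
   constraint over the users with [R_k > ln a_k] by [nu] bounds the objective of
   any feasible point by [sum_k mu_k ln a_k + nu ln lambda_s + sum_k max_t L_k t],
   where each [L_k] is a concave function of [t] alone.  [L_k] is maximal at
   [t = 1 - nu omega_k] when [nu omega_k <= 1] and at [t = 0] otherwise; by the
   choice of [upsilon*] the first case happens exactly for [k <= upsilon*], and
   these maximizers are the shares of [Q*].  Finally [f(x_s) = 0] says that [Q*]
   makes the sum-rate constraint over all users tight, so [Q*] attains the bound. *)

Lemma ln_prod (R : realType) (I : Type) (r : seq I) (P : pred I) (F : I -> R) :
  (forall i, P i -> 0 < F i) ->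
  ln (\prod_(i <- r | P i) F i) = \sum_(i <- r | P i) ln (F i).
Proof.
move=> F_gt0; elim: r => [|i r IHr]; first by rewrite !big_nil ln1.
rewrite !big_cons; case: ifP => // Pi.
by rewrite lnM ?posrE ?IHr ?F_gt0 //; apply: prodr_gt0.
Qed.

Lemma lnB_le (R : realType) (x y : R) : 0 < x -> 0 < y -> ln x - ln y <= x / y - 1.
Proof.
move=> x_gt0 y_gt0; rewrite -ln_div ?posrE //.
have xy_gt0 : 0 < x / y by exact: divr_gt0.
by have := @le_ln1Dx R (x / y - 1); rewrite (addrC 1) subrK; apply; lra.
Qed.

Lemma prod_ord_leS (R : comPzSemiRingType) (K : nat) (F : 'I_K -> R) (v u : 'I_K) :
  u = v.+1 :> nat ->
  \prod_(i < K | (i <= u)%N) F i = F u * \prod_(i < K | (i <= v)%N) F i.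
Proof.
move=> uE; rewrite (bigD1 u) //=; congr (_ * _); apply: eq_bigl => i.
by rewrite -(inj_eq val_inj) /= uE andbC -ltn_neqAle ltnS.
Qed.

Lemma sum_set_le (R : numDomainType) (I : finType) (L : {set I}) (F : I -> R) :
  (forall i, 0 <= F i) -> \sum_(i in L) F i <= \sum_i F i.
Proof.
move=> F_ge0; rewrite [leRHS](bigID (mem L)) /= lerDl.
by apply: sumr_ge0 => i _; exact: F_ge0.
Qed.

Section UserLagrangian.
Variable R : realType.
Implicit Types mu nu a b t : R.

Definition rate_gain a b t := ln (a + b * t) - ln a.

Definition share_penalty t := - ln (1 - t).

Definition user_lagrangian mu nu a b t :=
  mu * rate_gain a b t - nu * (rate_gain a b t + share_penalty t).

Lemma rate_gain_ge0 a b t : 0 < a -> 0 <= b -> 0 <= t -> 0 <= rate_gain a b t.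
Proof.
move=> a_gt0 b_ge0 t_ge0; have bt_ge0 := mulr_ge0 b_ge0 t_ge0.
by rewrite subr_ge0 ler_ln ?posrE; lra.
Qed.

Lemma share_penalty_ge0 t : 0 <= t < 1 -> 0 <= share_penalty t.
Proof. by move=> /andP[t_ge0 t_lt1]; rewrite oppr_ge0 ln_le0 //; lra. Qed.

Lemma user_lagrangian0 mu nu a b : user_lagrangian mu nu a b 0 = 0.
Proof.
by rewrite /user_lagrangian /rate_gain /share_penalty mulr0 addr0 subrr subr0 ln1; ring.
Qed.

Lemma user_lagrangian_tangent mu nu a b t t0 :
  0 <= nu <= mu -> 0 < a -> 0 < b -> 0 <= t < 1 -> 0 <= t0 < 1 ->
  user_lagrangian mu nu a b t - user_lagrangian mu nu a b t0 <=
  (t - t0) * ((mu - nu) * b / (a + b * t0) - nu / (1 - t0)).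
Proof.
move=> /andP[nu_ge0 nu_le_mu] a_gt0 b_gt0 /andP[t_ge0 t_lt1] /andP[t0_ge0 t0_lt1].
have bt_ge0 := mulr_ge0 (ltW b_gt0) t_ge0.
have bt0_ge0 := mulr_ge0 (ltW b_gt0) t0_ge0.
have gain : (mu - nu) * (ln (a + b * t) - ln (a + b * t0)) <=
            (mu - nu) * ((a + b * t) / (a + b * t0) - 1).
  by apply: ler_wpM2l; [lra | apply: lnB_le; lra].
have penalty : nu * (ln (1 - t) - ln (1 - t0)) <= nu * ((1 - t) / (1 - t0) - 1).
  by apply: ler_wpM2l => //; apply: lnB_le; lra.
have -> : (t - t0) * ((mu - nu) * b / (a + b * t0) - nu / (1 - t0)) =
          (mu - nu) * ((a + b * t) / (a + b * t0) - 1) + nu * ((1 - t) / (1 - t0) - 1).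
  by field; rewrite !gt_eqF //; lra.
move: gain penalty; rewrite /user_lagrangian /rate_gain /share_penalty !mulrBr; lra.
Qed.

(* The derivative of the concave map [user_lagrangian mu nu a b] vanishes at
   [1 - nu (a + b) / (mu b)]. *)
Lemma user_lagrangian_le_stationary mu nu a b t :
  0 < mu -> 0 < nu -> 0 < a -> 0 < b -> nu * ((a + b) / (mu * b)) <= 1 -> 0 <= t < 1 ->
  user_lagrangian mu nu a b t <= user_lagrangian mu nu a b (1 - nu * ((a + b) / (mu * b))).
Proof.
move=> mu_gt0 nu_gt0 a_gt0 b_gt0 stat_le1 t_range.
have om_gt0 : 0 < (a + b) / (mu * b) by apply: divr_gt0; [lra | exact: mulr_gt0].
have nu_lt_mu : nu < mu.
  move: stat_le1; rewrite mulrA ler_pdivrMr ?mulr_gt0 // mul1r => h.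
  by have := mulr_gt0 nu_gt0 a_gt0; nra.
set t0 := 1 - _.
have t0_range : 0 <= t0 < 1 by have := mulr_gt0 nu_gt0 om_gt0; rewrite /t0; lra.
have nu_range : 0 <= nu <= mu by apply/andP; split; lra.
have := user_lagrangian_tangent nu_range a_gt0 b_gt0 t_range t0_range.
have -> : (mu - nu) * b / (a + b * t0) - nu / (1 - t0) = 0.
  have ab_gt0 : 0 < a + b by lra.
  have := mulr_gt0 nu_gt0 ab_gt0; have : 0 < (a + b) * (mu - nu) by apply: mulr_gt0; lra.
  by rewrite /t0 => ? ?; field; rewrite !gt_eqF //; lra.
rewrite mulr0; lra.
Qed.

Lemma user_lagrangian_le0 mu nu a b t :
  0 < mu -> 0 < nu -> 0 < a -> 0 < b -> mu * b <= nu * (a + b) -> 0 <= t < 1 ->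
  user_lagrangian mu nu a b t <= 0.
Proof.
move=> mu_gt0 nu_gt0 a_gt0 b_gt0 slope_le t_range.
have [nu_le_mu|mu_lt_nu] := lerP nu mu.
  have nu_range : 0 <= nu <= mu by apply/andP; split; lra.
  have zero_range : 0 <= (0 : R) < 1 by rewrite lexx ltr01.
  have := user_lagrangian_tangent nu_range a_gt0 b_gt0 t_range zero_range.
  rewrite user_lagrangian0 !subr0 mulr0 addr0 divr1 => /le_trans; apply.
  rewrite mulr_ge0_le0 //; first by case/andP: t_range.
  by rewrite subr_le0 ler_pdivrMr //; lra.
have gain_ge0 := rate_gain_ge0 a_gt0 (ltW b_gt0) (proj1 (andP t_range)).
have pen_ge0 := share_penalty_ge0 t_range.
have := mulr_ge0 (ltW nu_gt0) pen_ge0; have : 0 <= (nu - mu) * rate_gain a b t.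
  by apply: mulr_ge0; lra.
rewrite /user_lagrangian; lra.
Qed.
End UserLagrangian.

Lemma scaled_rate_le (R : realType) (mu nu r G p phi : R) :
  0 < mu -> 0 < nu -> 0 <= p -> 0 <= phi -> r <= G -> mu * G - nu * (G + p) <= phi ->
  mu * r <= phi + nu * (Num.max r 0 + p).
Proof.
move=> mu_gt0 nu_gt0 p_ge0 phi_ge0 r_le_G lagr_le.
have := mulr_ge0 (ltW nu_gt0) p_ge0.
case: ler0P => [r_le0|r_gt0].
  by have := mulr_ge0_le0 (ltW mu_gt0) r_le0; lra.
have [nu_le_mu|mu_lt_nu] := lerP nu mu.
  have : (mu - nu) * r <= (mu - nu) * G by apply: ler_wpM2l => //; lra.
  lra.
have : 0 < (nu - mu) * r by apply: mulr_gt0 => //; lra.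
lra.
Qed.

Lemma lagrangian_weak_duality (R : realType) (I : finType) (mu r G p phi : I -> R) (nu c : R) :
  (forall i, 0 < mu i) -> 0 < nu -> (forall i, 0 <= p i) -> (forall i, 0 <= phi i) ->
  (forall i, r i <= G i) -> (forall i, mu i * G i - nu * (G i + p i) <= phi i) ->
  (forall L : {set I}, \sum_(i in L) r i + \sum_i p i <= c) ->
  \sum_i mu i * r i <= \sum_i phi i + nu * c.
Proof.
move=> mu_gt0 nu_gt0 p_ge0 phi_ge0 r_le_G lagr_le sum_le_c.
have user_le i : mu i * r i <= phi i + nu * (Num.max (r i) 0 + p i).
  exact: scaled_rate_le.
have pos_part : \sum_(i in [set i | 0 < r i]) r i = \sum_i Num.max (r i) 0.
  by rewrite big_mkcond; apply: eq_bigr => i _; rewrite inE; case: ler0P.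
apply: le_trans (ler_sum _ (fun i _ => user_le i)) _.
rewrite big_split /= -mulr_sumr big_split /= -pos_part lerD2l.
by apply: ler_wpM2l; [exact: ltW | exact: sum_le_c].
Qed.

Definition relay_noise (R : realType) (N : nat) (alpha d : R) : R := d `^ alpha / N%:R.

Definition share (R : realType) (s : R) (Q : option R) : R :=
  if Q is Some q then s / (s + q) else 0.

Lemma share_ge0_lt1 (R : realType) (s : R) (Q : option R) :
  0 < s -> (if Q is Some q then 0 < q else true) -> 0 <= share s Q < 1.
Proof.
case: Q => [q|] s_gt0 //=; last by rewrite lexx ltr01.
move=> q_gt0; rewrite divr_ge0 ?ltr_pdivrMr ?mul1r; lra.
Qed.

Lemma Irate_share (R : realType) (K M N : nat) (alpha : R) (P dd dr : 'I_K -> R)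
    (Q : 'I_K -> option R) k :
  (0 < N)%N -> 0 < dr k -> (if Q k is Some q then 0 < q else true) ->
  Irate M N alpha P dd dr Q k =
  ln (acoef M N alpha P dd k + bcoef N alpha P dr k * share (relay_noise N alpha (dr k)) (Q k)).
Proof.
rewrite /Irate /Cap /qgain /acoef /bcoef /share /relay_noise => N_gt0 dr_gt0.
case: (Q k) => [q q_gt0|_]; last by rewrite mulr0 !addr0.
have pow_gt0 := powR_gt0 alpha dr_gt0; have N_gt0' : 0 < N%:R :> R by rewrite ltr0n.
by congr ln; field; rewrite !gt_eqF ?addr_gt0 ?mulr_gt0.
Qed.

Lemma qpen_share (R : realType) (N : nat) (alpha d : R) (Q : option R) :
  (0 < N)%N -> 0 < d -> (if Q is Some q then 0 < q else true) ->
  qpen N alpha d Q = share_penalty (share (relay_noise N alpha d) Q).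
Proof.
rewrite /qpen /Cap /share_penalty /share /relay_noise => N_gt0 d_gt0.
case: Q => [q q_gt0|_]; last by rewrite subr0 ln1 oppr0.
have pow_gt0 := powR_gt0 alpha d_gt0; have N_gt0' : 0 < N%:R :> R by rewrite ltr0n.
rewrite -lnV ?posrE; last first.
  by rewrite subr_gt0 ltr_pdivrMr ?mul1r ?addr_gt0 ?divr_gt0 // ltrDl.
by congr ln; field; rewrite addrC addrK !gt_eqF ?addr_gt0 ?mulr_gt0.
Qed.

Section StationaryShare.
Variables (R : realType) (mu a b y : R).
Hypotheses (mu_gt0 : 0 < mu) (a_gt0 : 0 < a) (b_gt0 : 0 < b).
Hypothesis omega_lt_y : (a + b) / (mu * b) < y.

(* For an active user and [y = x_s + omega_{upsilon*}], [lam] is [lambda_k^*]. *)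
Local Notation lam := (mu * b / a * (y - 1 / mu)).

Let y_gt0 : 0 < y.
Proof. by apply: lt_trans omega_lt_y; rewrite divr_gt0 ?addr_gt0 ?mulr_gt0. Qed.

Let excess_gt0 : 0 < mu * b * y - (a + b).
Proof. by move: omega_lt_y; rewrite ltr_pdivrMr ?mulr_gt0 // mulrC subr_gt0. Qed.

Let lam_subr1 : lam - 1 = (mu * b * y - (a + b)) / a.
Proof. by field; rewrite !gt_eqF. Qed.

Lemma stationary_lambda_gt1 : 1 < lam.
Proof. by rewrite -subr_gt0 lam_subr1 divr_gt0. Qed.

Lemma stationary_quant_gt0 s : 0 < s -> 0 < (s * a + b * s) / (a * (lam - 1)).
Proof.
by move=> s_gt0; rewrite lam_subr1 divr_gt0 ?addr_gt0 ?mulr_gt0 ?divr_gt0 ?invr_gt0.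
Qed.

Lemma share_stationary s : 0 < s ->
  share s (Some ((s * a + b * s) / (a * (lam - 1)))) = 1 - y^-1 * ((a + b) / (mu * b)).
Proof.
move=> s_gt0; rewrite /share lam_subr1.
have := mulr_gt0 s_gt0 excess_gt0; have := mulr_gt0 s_gt0 a_gt0.
have := mulr_gt0 b_gt0 s_gt0.
by move=> ? ? ?; field; rewrite !gt_eqF //; lra.
Qed.

Lemma gain_penalty_stationary :
  rate_gain a b (1 - y^-1 * ((a + b) / (mu * b))) +
  share_penalty (1 - y^-1 * ((a + b) / (mu * b))) = ln lam.
Proof.
have ab_gt0 : 0 < a + b by rewrite addr_gt0.
have t_lt1 : 0 < y^-1 * ((a + b) / (mu * b)).
  by rewrite mulr_gt0 ?invr_gt0 ?divr_gt0 ?mulr_gt0.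
have t_gt0 : 0 < 1 - y^-1 * ((a + b) / (mu * b)).
  by rewrite subr_gt0 mulrC ltr_pdivrMr // mul1r.
rewrite /rate_gain /share_penalty subKr.
rewrite -!ln_div ?posrE ?divr_gt0 ?addr_gt0 ?mulr_gt0 ?invr_gt0 ?mulr_gt0 //.
by congr ln; field; rewrite !gt_eqF.
Qed.
End StationaryShare.

Section Optimum.
Variables (R : realType) (K M N : nat) (Pr ddr alpha : R).
Variables (P dd dr mu : 'I_K -> R) (us : 'I_K) (xs : R).
Implicit Types k : 'I_K.

Local Notation a := (acoef M N alpha P dd).
Local Notation b := (bcoef N alpha P dr).
Local Notation s k := (relay_noise N alpha (dr k)).
Local Notation om := (omega M N alpha P dd dr mu).
Local Notation lam_s := (lambda_s M N Pr ddr alpha).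
Local Notation Qs := (Qstar M N alpha P dd dr mu us xs).
Local Notation t k := (share (s k) (Qs k)).
Local Notation y := (xs + om us).
Local Notation nu := (xs + om us)^-1.
Local Notation dual_bound := (\sum_(k < K) mu k * ln (a k) +
  (\sum_(k < K) user_lagrangian (mu k) nu (a k) (b k) (t k) + nu * ln lam_s)).

Hypotheses (N_gt0 : (0 < N)%N) (N_lt_M : (N < M)%N) (Pr_gt0 : 0 < Pr) (ddr_gt0 : 0 < ddr).
Hypotheses (P_gt0 : forall k, 0 < P k) (dd_gt0 : forall k, 0 < dd k).
Hypotheses (dr_gt0 : forall k, 0 < dr k) (mu_gt0 : forall k, 0 < mu k).
Hypothesis omega_mono : forall i j : 'I_K, (i <= j)%N -> om i <= om j.
Hypothesis ups_max :
  forall u : 'I_K, (us < u)%N -> ~ ups_cond M N Pr ddr alpha P dd dr mu u.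
Hypotheses (xs_gt0 : 0 < xs) (fpoly_xs : fpoly M N Pr ddr alpha P dd dr mu us xs = 0).

Lemma acoef_gt0 k : 0 < a k.
Proof.
rewrite /acoef /dsnr addr_gt0 // divr_gt0 ?mulr_gt0 ?powR_gt0 //.
by rewrite subr_gt0 ltr_nat.
Qed.

Lemma bcoef_gt0 k : 0 < b k.
Proof. by rewrite /bcoef divr_gt0 ?mulr_gt0 ?powR_gt0 ?ltr0n. Qed.

Lemma relay_noise_gt0 k : 0 < s k.
Proof. by rewrite /relay_noise divr_gt0 ?powR_gt0 ?ltr0n. Qed.

Lemma bcoef_relay_noise k : b k * s k = P k.
Proof.
have := powR_gt0 alpha (dr_gt0 k); have : 0 < N%:R :> R by rewrite ltr0n.
by rewrite /bcoef /relay_noise => ? ?; field; rewrite !gt_eqF.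
Qed.

Lemma omega_subr_inv k : om k - 1 / mu k = a k / (mu k * b k).
Proof.
have := mu_gt0 k; have := bcoef_gt0 k.
by rewrite /omega => ? ?; field; rewrite !gt_eqF.
Qed.

Lemma omega_gt_inv k : 1 / mu k < om k.
Proof.
rewrite -subr_gt0 omega_subr_inv.
exact: divr_gt0 (acoef_gt0 k) (mulr_gt0 (mu_gt0 k) (bcoef_gt0 k)).
Qed.

Lemma omega_lt_active k : (k <= us)%N -> om k < y.
Proof. by move=> k_le; rewrite -[om k]add0r ltr_leD // omega_mono. Qed.

Lemma prod_active :
  \prod_(k < K | (k <= us)%N) (y - 1 / mu k) =
  lam_s * \prod_(k < K | (k <= us)%N) (a k / (mu k * b k)).
Proof. exact: subr0_eq fpoly_xs. Qed.

(* Maximality of [upsilon*]: if [x_s + omega_{upsilon*}] exceeded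
   [omega_{upsilon*+1}], the root [x_s] would witness [ups_cond (upsilon*+1)]. *)
Lemma omega_ge_inactive k : (us < k)%N -> y <= om k.
Proof.
move=> us_lt_k.
pose u := Ordinal (leq_ltn_trans us_lt_k (ltn_ord k)).
apply: le_trans (omega_mono (_ : (u <= k)%N)) => //.
rewrite leNgt; apply/negP => om_u_lt_y; apply: (ups_max (u := u) (ltnSn us)).
rewrite /ups_cond !(@prod_ord_leS _ _ _ us u) // omega_subr_inv.
rewrite [leRHS]mulrCA -prod_active.
apply: ler_wpM2l; first exact: ltW (divr_gt0 (acoef_gt0 u) (mulr_gt0 (mu_gt0 u) (bcoef_gt0 u))).
apply: ler_prod => i i_le_us; apply/andP; split; last by rewrite lerD2r ltW.
by rewrite subr_ge0 (le_trans (ltW (omega_gt_inv i))) // omega_mono // leqW.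
Qed.

Lemma Qstar_active k : (k <= us)%N ->
  Qs k = Some ((s k * a k + b k * s k) / (a k * (mu k * b k / a k * (y - 1 / mu k) - 1))).
Proof.
move=> k_le; have lam_gt1 := stationary_lambda_gt1 (mu_gt0 k) (acoef_gt0 k) (bcoef_gt0 k)
  (omega_lt_active k_le).
by rewrite /Qstar /lambda_star k_le /= gt_eqF // bcoef_relay_noise.
Qed.

Lemma Qstar_inactive k : (us < k)%N -> Qs k = None.
Proof. by move=> us_lt_k; rewrite /Qstar /lambda_star leqNgt us_lt_k /= eqxx. Qed.

Lemma Qstar_gt0 k : if Qs k is Some q then 0 < q else true.
Proof.
have [k_le|us_lt_k] := leqP k us; last by rewrite Qstar_inactive.
rewrite Qstar_active //.
by have := stationary_quant_gt0 (mu_gt0 k) (acoef_gt0 k) (bcoef_gt0 k) (omega_lt_active k_le)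
  (relay_noise_gt0 k).
Qed.

Lemma share_Qstar k : t k = if (k <= us)%N then 1 - nu * om k else 0.
Proof.
have [k_le|us_lt_k] := leqP k us; last by rewrite Qstar_inactive.
rewrite Qstar_active //.
by have := share_stationary (mu_gt0 k) (acoef_gt0 k) (bcoef_gt0 k) (omega_lt_active k_le)
  (relay_noise_gt0 k).
Qed.

Lemma y_gt0 : 0 < y.
Proof. by rewrite addr_gt0 // (lt_trans _ (omega_gt_inv us)) // divr_gt0 ?ltr01. Qed.

Lemma nu_gt0 : 0 < nu.
Proof. by rewrite invr_gt0 y_gt0. Qed.

Lemma user_lagrangian_le_Qstar k (r : R) : 0 <= r < 1 ->
  user_lagrangian (mu k) nu (a k) (b k) r <= user_lagrangian (mu k) nu (a k) (b k) (t k).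
Proof.
move=> r_range; rewrite share_Qstar; case: ifPn => [k_le|]; last rewrite -ltnNge => us_lt_k.
  apply: (user_lagrangian_le_stationary (mu_gt0 k) nu_gt0 (acoef_gt0 k) (bcoef_gt0 k) _ r_range).
  by rewrite mulrC ler_pdivrMr ?y_gt0 // mul1r ltW // omega_lt_active.
rewrite user_lagrangian0.
apply: (user_lagrangian_le0 (mu_gt0 k) nu_gt0 (acoef_gt0 k) (bcoef_gt0 k) _ r_range).
have := omega_ge_inactive us_lt_k.
rewrite ler_pdivlMr => [le_ab|]; last exact: mulr_gt0 (mu_gt0 k) (bcoef_gt0 k).
by rewrite -[leLHS]mul1r -(mulVf (lt0r_neq0 y_gt0)) -mulrA ler_wpM2l // ltW // nu_gt0.
Qed.

Lemma user_lagrangian_Qstar_ge0 k : 0 <= user_lagrangian (mu k) nu (a k) (b k) (t k).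
Proof.
by rewrite -(user_lagrangian0 (mu k) nu (a k) (b k)) user_lagrangian_le_Qstar ?lexx ?ltr01.
Qed.

Lemma sum_gain_penalty_Qstar :
  \sum_(k < K) (rate_gain (a k) (b k) (t k) + share_penalty (t k)) = ln lam_s.
Proof.
rewrite (eq_bigr (fun k => if (k <= us)%N then ln (mu k * b k / a k * (y - 1 / mu k)) else 0)).
  rewrite -big_mkcond -ln_prod; last first.
    move=> k k_le; rewrite -subr_gt0.
    have := stationary_lambda_gt1 (mu_gt0 k) (acoef_gt0 k) (bcoef_gt0 k) (omega_lt_active k_le).
    lra.
  congr ln; rewrite big_split /= prod_active mulrCA -big_split /= big1 ?mulr1 // => k _.
  have := mu_gt0 k; have := acoef_gt0 k; have := bcoef_gt0 k.
  by move=> ? ? ?; field; rewrite !gt_eqF.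
move=> k _; rewrite share_Qstar; case: ifPn => [k_le|_].
  by have := gain_penalty_stationary (mu_gt0 k) (acoef_gt0 k) (bcoef_gt0 k) (omega_lt_active k_le).
by rewrite /rate_gain /share_penalty mulr0 addr0 subrr subr0 ln1 oppr0 addr0.
Qed.

Lemma xi_share (Q : 'I_K -> option R) : (forall k, if Q k is Some q then 0 < q else true) ->
  xi M N Pr ddr alpha dr Q = ln lam_s - \sum_(k < K) share_penalty (share (s k) (Q k)).
Proof.
move=> Q_gt0; rewrite /xi /lambda_s lnXn; last first.
  rewrite addr_gt0 // divr_gt0 //; first by rewrite mulr_gt0 // subr_gt0 ltr_nat.
  by rewrite mulr_gt0 ?ltr0n ?powR_gt0.
congr (_ - _); first by rewrite mulr_natl.
by apply: eq_bigr => k _; rewrite qpen_share.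
Qed.

Lemma xi_Qstar : xi M N Pr ddr alpha dr Qs = \sum_(k < K) rate_gain (a k) (b k) (t k).
Proof. by rewrite (xi_share Qstar_gt0) -sum_gain_penalty_Qstar big_split /= addrK. Qed.

Lemma Irate_Qstar k : Irate M N alpha P dd dr Qs k = ln (a k) + rate_gain (a k) (b k) (t k).
Proof. by rewrite Irate_share ?Qstar_gt0 // /rate_gain [RHS]addrC subrK. Qed.

Lemma Qstar_feasible : feasible M N Pr ddr alpha P dd dr (Irate M N alpha P dd dr Qs) Qs.
Proof.
have gain_ge0 k : 0 <= rate_gain (a k) (b k) (t k).
  have /andP[t_ge0 _] := share_ge0_lt1 (relay_noise_gt0 k) (Qstar_gt0 k).
  exact: rate_gain_ge0 (acoef_gt0 k) (ltW (bcoef_gt0 k)) t_ge0.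
split; [move=> k; split=> // | exact: Qstar_gt0 | move=> L].
  rewrite /Jrate xi_Qstar Irate_Qstar; apply: lerD; first by rewrite /Cap /acoef.
  by have := sum_set_le [set k] gain_ge0; rewrite big_set1.
rewrite /JLam xi_Qstar (eq_bigr _ (fun k _ => Irate_Qstar k)) big_split /= addrC.
by apply: lerD; [exact: sum_set_le | rewrite /Cap /acoef].
Qed.

Lemma objective_Qstar : objective mu (Irate M N alpha P dd dr Qs) = dual_bound.
Proof.
rewrite /objective -sum_gain_penalty_Qstar mulr_sumr -!big_split /=.
by apply: eq_bigr => k _; rewrite Irate_Qstar /user_lagrangian; ring.
Qed.

Lemma feasible_objective_le (Rv Q : 'I_K -> R) :
  feasible M N Pr ddr alpha P dd dr Rv (fun k => Some (Q k)) -> objective mu Rv <= dual_bound.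
Proof.
case=> rate_le Q_gt0 sum_le.
pose tQ k := share (s k) (Some (Q k)).
have tQ_range k : 0 <= tQ k < 1 := share_ge0_lt1 (Q := Some (Q k)) (relay_noise_gt0 k) (Q_gt0 k).
have := @lagrangian_weak_duality R _ mu (fun k => Rv k - ln (a k))
  (fun k => rate_gain (a k) (b k) (tQ k)) (fun k => share_penalty (tQ k))
  (fun k => user_lagrangian (mu k) nu (a k) (b k) (t k)) nu (ln lam_s) mu_gt0 nu_gt0.
have rate_le_gain k : Rv k - ln (a k) <= rate_gain (a k) (b k) (tQ k).
  by rewrite lerD2r; have [+ _] := rate_le k; rewrite Irate_share.
have sum_le_lam (L : {set 'I_K}) :
    \sum_(k in L) (Rv k - ln (a k)) + \sum_(k < K) share_penalty (tQ k) <= ln lam_s.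
  have := sum_le L; rewrite /JLam (xi_share (Q := fun k => Some (Q k))) // sumrB.
  by rewrite -lerBrDr addrAC lerBlDr [leRHS]addrAC.
move=> /(_ (fun k => share_penalty_ge0 (tQ_range k)) user_lagrangian_Qstar_ge0 rate_le_gain
  (fun k => user_lagrangian_le_Qstar k (tQ_range k)) sum_le_lam) dual.
have -> : objective mu Rv =
    \sum_(k < K) mu k * (Rv k - ln (a k)) + \sum_(k < K) mu k * ln (a k).
  by rewrite /objective -big_split; apply: eq_bigr => k _ /=; rewrite -mulrDr subrK.
by rewrite addrC lerD2l.
Qed.

End Optimum.

Theorem theorem6 (R : realType) (K M N : nat) (Pr ddr alpha : R)
  (P dd dr mu : 'I_K -> R) (us : 'I_K) (xs : R) :
  (2 <= K)%N -> (1 <= N)%N -> (N < M)%N ->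
  0 < Pr -> 0 < ddr -> 0 < alpha ->
  (forall k, 0 < P k) -> (forall k, 0 < dd k) -> (forall k, 0 < dr k) ->
  (forall k, 0 < mu k <= 1) -> \sum_(k < K) mu k = 1 ->
  (forall i j : 'I_K, (i <= j)%N ->
     omega M N alpha P dd dr mu i <= omega M N alpha P dd dr mu j) ->
  ups_cond M N Pr ddr alpha P dd dr mu us ->
  (forall u : 'I_K, (us < u)%N -> ~ ups_cond M N Pr ddr alpha P dd dr mu u) ->
  0 < xs -> fpoly M N Pr ddr alpha P dd dr mu us xs = 0 ->
  exists Rs : 'I_K -> R,
    feasible M N Pr ddr alpha P dd dr Rs (Qstar M N alpha P dd dr mu us xs) /\
    forall (Rv : 'I_K -> R) (Q : 'I_K -> R),
      feasible M N Pr ddr alpha P dd dr Rv (fun k => Some (Q k)) ->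
      objective mu Rv <= objective mu Rs.
Proof.
move=> _ N_gt0 N_lt_M Pr_gt0 ddr_gt0 _ P_gt0 dd_gt0 dr_gt0 mu_range _ omega_mono _ ups_max
  xs_gt0 fpoly_xs.
have mu_gt0 k : 0 < mu k by case/andP: (mu_range k).
exists (Irate M N alpha P dd dr (Qstar M N alpha P dd dr mu us xs)); split.
  exact: Qstar_feasible.
move=> Rv Q feasible_RvQ; rewrite (objective_Qstar (Pr := Pr) (ddr := ddr)) //.
exact: feasible_objective_le feasible_RvQ.
Qed.
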